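(* For every $\omega>0$, every eigenvalue $\eta$ of the preconditioned matrix $\mathcal F_\omega^{-1}\mathcal R$ satisfies $$|\eta-1|\le\sigma(\omega),$$ where $\sigma(\omega)<1$. That is, all eigenvalues lie in the closed disk of radius $\sigma(\omega)$ centered at $1$.
   Context: Let $M\ge 1$ be an integer and let $I$ denote an identity matrix of the appropriate size. Let $T\in\mathbb R^{M\times M}$ be real symmetric positive definite, with spectrum $\lambda(T)$. Let $D\in\mathbb R^{M\times M}$ be diagonal with nonnegative diagonal entries. Define the block matrices in $\mathbb R^{2M\times 2M}$: $$\mathcal R=\begin{bmatrix} I & T-D\\ D-T & I\end{bmatrix},\qquad \mathcal T=\begin{bmatrix} I & T\\ -T & I\end{bmatrix},\qquad \mathcal D=\begin{bmatrix} 0 & -D\\ D & 0\end{bmatrix}.$$ Thus $\mathcal R=\mathcal T+\mathcal D$. For $\omega>0$, the NASS preconditioner is $$\mathcal F_\omega=\tfrac{1}{2\omega}(\omega I+\mathcal T)(\omega I+\mathcal D).$$ Also define $$\sigma(\omega)=\max_{\lambda\in\lambda(T)}\sqrt{\frac{(\omega-1)^2+\lambda^2}{(\omega+1)^2+\lambda^2}} .$$ *)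

From HB Require Import structures.
From mathcomp Require Import all_boot all_order all_algebra.
From mathcomp Require Import polyrcf complex.
Set Implicit Arguments. Unset Strict Implicit. Unset Printing Implicit Defensive.
Import Order.TTheory GRing.Theory Num.Theory.
Local Open Scope ring_scope.

Section NASS.
Variables (R : rcfType) (M : nat).

Definition calR (T D : 'M[R]_M) : 'M[R]_(M + M) :=
  block_mx 1%:M (T - D) (D - T) 1%:M.
Definition calT (T : 'M[R]_M) : 'M[R]_(M + M) :=
  block_mx 1%:M T (- T) 1%:M.
Definition calD (D : 'M[R]_M) : 'M[R]_(M + M) :=
  block_mx 0 (- D) D 0.

Definition NASS (omega : R) (T D : 'M[R]_M) : 'M[R]_(M + M) :=
  (2 * omega)^-1 *: ((omega%:M + calT T) *m (omega%:M + calD D)).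

(* spectrum of T: the real roots of its characteristic polynomial
   (for symmetric T, all eigenvalues are real) *)
Definition spectrum (T : 'M[R]_M) : seq R := rootsR (char_poly T).

Definition sigma (T : 'M[R]_M) (omega : R) : R :=
  \big[Num.max/0]_(l <- spectrum T)
     Num.sqrt (((omega - 1) ^+ 2 + l ^+ 2) / ((omega + 1) ^+ 2 + l ^+ 2)).

Definition posdef (T : 'M[R]_M) : Prop :=
  forall x : 'cV[R]_M, x != 0 -> 0 < (x^T *m T *m x) 0 0.

Definition is_diag_nonneg (D : 'M[R]_M) : Prop :=
  (forall i j : 'I_M, i != j -> D i j = 0) /\ (forall i : 'I_M, 0 <= D i i).

End NASS.

Definition cplx_mx (R : rcfType) m n (A : 'M[R]_(m, n)) : 'M[complex R]_(m, n) :=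
  map_mx (fun x : R => x%:C)%C A.

From HB Require Import structures.
From mathcomp Require Import all_boot all_order all_algebra.
From mathcomp Require Import polyrcf complex sesquilinear spectral.
From mathcomp Require Import ring lra.

(* Put P = ωI + 𝒯 and Q = ωI + 𝒟, so that 2ω F_ω = P Q.  The identity
   P Q - 2ω (𝒯 + 𝒟) = (ωI - 𝒯)(ωI - 𝒟) turns every eigenvalue η of F_ω^-1 ℛ into
   the eigenvalue 1 - η of the Cayley product P^-1 (ωI - 𝒯) (ωI - 𝒟) Q^-1.
   As 𝒟 is skew-symmetric, (ωI - 𝒟) Q^-1 is an isometry.  As 𝒯 = I + S with
   S = [0 T; -T 0] skew-symmetric, |x (ωI -+ 𝒯)|^2 = (ω -+ 1)^2 |x|^2 + |x S|^2,
   and in an orthonormal eigenbasis of the symmetric T both sides split into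
   terms weighted by (ω -+ 1)^2 + λ^2, λ ∈ λ(T); comparing them term by term gives
   |x P^-1 (ωI - 𝒯)| <= σ(ω) |x|.  Hence |1 - η| <= σ(ω), and σ(ω) < 1 because
   (ω - 1)^2 < (ω + 1)^2. *)

Set Implicit Arguments. Unset Strict Implicit. Unset Printing Implicit Defensive.
Import Order.TTheory GRing.Theory Num.Theory.
Local Open Scope ring_scope.
Local Open Scope sesquilinear_scope.

Local Notation "''[' u ]" := (dotmx u u) : ring_scope.

(* No invertibility is needed: [invmx] is the identity on singular matrices. *)
Lemma shift_invmx_comm (R : comUnitRingType) n (S : 'M[R]_n) (a b : R) :
  (b%:M - S) *m invmx (a%:M + S) = invmx (a%:M + S) *m (b%:M - S).
Proof.
have comm : (a%:M + S) *m (b%:M - S) = (b%:M - S) *m (a%:M + S).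
  rewrite !mulmxDl !mulmxDr !mulmxN !mulNmx !mul_scalar_mx !mul_mx_scalar.
  by rewrite !scale_scalar_mx mulrC addrACA [_ - _]addrC.
have [PU|PnU] := boolP (a%:M + S \in unitmx); last by rewrite invmx_out ?inE.
by rewrite -[LHS]mul1mx -(mulVmx PU) -mulmxA (mulmxA _ (b%:M - S)) comm mulmxK.
Qed.

Definition skew_block (V : zmodType) m (A : 'M[V]_m) : 'M[V]_(m + m) :=
  block_mx 0 A (- A) 0.

Lemma NASS_splitting (R : comPzRingType) n (T D : 'M[R]_n) (w : R) :
  (w%:M + T) *m (w%:M + D) - (2 * w) *: (T + D) = (w%:M - T) *m (w%:M - D).
Proof.
rewrite !mulmxDl !mulmxDr !mulmxN !mulNmx opprK !mul_scalar_mx !mul_mx_scalar.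
rewrite mulr_natl -scalerMnl mulr2n scalerDr !opprD !addrA.
rewrite (addrAC _ (T *m D)) addrK (addrAC _ (T *m D)) addrK.
by rewrite [RHS]addrAC [in RHS](addrAC (w *: w%:M)) addrAC.
Qed.

Lemma eigenvalue_NASS_cayley (F : fieldType) n (T D : 'M[F]_n) (w eta : F) :
  2 * w != 0 -> w%:M + T \in unitmx -> w%:M + D \in unitmx ->
  eigenvalue (invmx ((2 * w)^-1 *: ((w%:M + T) *m (w%:M + D))) *m (T + D)) eta ->
  eigenvalue (invmx (w%:M + T) *m (w%:M - T) *m ((w%:M - D) *m invmx (w%:M + D)))
    (1 - eta).
Proof.
set P := w%:M + T; set Q := w%:M + D; set G := _ *: (P *m Q).
move=> w2_neq0 PU QU /eigenvalueP[v vE v0].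
have GU : G \in unitmx by rewrite unitmxZ ?unitfE ?invr_eq0 // unitmx_mul PU QU.
have cayleyE : invmx P *m (w%:M - T) *m ((w%:M - D) *m invmx Q)
    = 1%:M - (2 * w) *: (invmx P *m (T + D) *m invmx Q).
  rewrite mulmxA -(mulmxA (invmx P)) -NASS_splitting -/P -/Q mulmxBr mulmxBl.
  by rewrite mulmxA mulVmx // mul1mx mulmxV // -scalemxAr -scalemxAl.
have vQP : v *m invmx Q *m invmx P = (2 * w)^-1 *: (v *m invmx G).
  rewrite -{1}(mulmxKV GU v) /G -scalemxAr -!scalemxAl.
  by rewrite !mulmxA mulmxK // mulmxK.
apply/eigenvalueP; exists (v *m invmx Q); last first.
  by apply: contra v0 => /eqP s0; rewrite -(mulmxKV QU v) s0 mul0mx.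
rewrite cayleyE mulmxBr mulmx1 scalerBl scale1r -scalemxAr !mulmxA vQP.
by rewrite -!scalemxAl scalerA mulfV // scale1r -(mulmxA v) vE -scalemxAl.
Qed.

Section Hermitian.
Variable C : numClosedFieldType.

Lemma dotmx_mulmx n m (u : 'rV[C]_n) (A : 'M[C]_(n, m)) :
  '[u *m A] = (u *m (A *m A^t*) *m u^t*) 0 0.
Proof. by rewrite !dotmxE trmx_mul map_mxM !mulmxA. Qed.

Lemma dnormN n (u : 'rV[C]_n) : '[- u] = '[u].
Proof. by rewrite -scaleN1r dnormZ normrN1 expr1n mul1r. Qed.

Lemma dotmx_mul_shift_skew n (S : 'M[C]_n) (a : C) (u : 'rV[C]_n) :
  S^t* = - S -> a \is Num.real ->
  '[u *m (a%:M + S)] = a ^+ 2 * '[u] + '[u *m S].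
Proof.
move=> skewS ra; rewrite dotmx_mulmx.
have -> : (a%:M + S) *m (a%:M + S)^t* = (a ^+ 2)%:M + S *m S^t*.
  rewrite linearD map_mxD /= tr_scalar_mx map_scalar_mx /= (conj_Creal ra) skewS.
  rewrite mulmxDl !mulmxDr mulmxN mul_scalar_mx mul_mx_scalar.
  by rewrite mul_scalar_mx scale_scalar_mx -expr2 addrA subrK.
by rewrite mulmxDr mulmxDl mxE mul_mx_scalar -scalemxAl mxE
  -dotmxE -dotmx_mulmx.
Qed.

Lemma skew_shift_unitmx n (S : 'M[C]_n) (a : C) :
  S^t* = - S -> a \is Num.real -> a != 0 -> a%:M + S \in unitmx.
Proof.
move=> skewS ra a0; rewrite unitmxE unitfE; apply/det0P => -[u u0 uA0].
have a2_ge0 : 0 <= a ^+ 2 by rewrite -realEsqr.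
have := dotmx_mul_shift_skew u skewS ra; rewrite uA0 linear0l => /esym/eqP.
rewrite paddr_eq0 ?(mulr_ge0 a2_ge0) ?dnorm_ge0 // mulf_eq0 expf_eq0 (negPf a0).
by rewrite dnorm_eq0 (negPf u0).
Qed.

Lemma dotmx_cayley_skew n (S : 'M[C]_n) (a : C) (u : 'rV[C]_n) :
  S^t* = - S -> a \is Num.real -> a != 0 ->
  '[u *m ((a%:M - S) *m invmx (a%:M + S))] = '[u].
Proof.
move=> skewS ra a0; have PU := skew_shift_unitmx skewS ra a0.
have skewNS : (- S)^t* = - - S by rewrite linearN map_mxN skewS.
rewrite shift_invmx_comm mulmxA -[in RHS](mulmxKV PU u).
by rewrite !dotmx_mul_shift_skew // mulmxN dnormN.
Qed.

Lemma eigenvalue_sqr_norm_le n (A : 'M[C]_n) (mu c : C) :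
  (forall x : 'rV_n, '[x *m A] <= c * '[x]) -> eigenvalue A mu -> `|mu| ^+ 2 <= c.
Proof.
move=> A_bound /eigenvalueP[v Av v0]; have := A_bound v.
by rewrite Av dnormZ ler_pM2r // dnorm_gt0.
Qed.

Lemma dotmx_sum n (u : 'rV[C]_n) : '[u] = \sum_j u 0 j * (u 0 j)^*.
Proof. by rewrite dotmxE mxE; apply: eq_bigr => j _; rewrite !mxE. Qed.

Lemma dotmx_mul_unitary n (P : 'M[C]_n) (u : 'rV[C]_n) :
  P \is unitarymx -> '[u *m P] = '[u].
Proof. by move=> /unitarymxP PU; rewrite dotmx_mulmx PU mulmx1 dotmxE. Qed.

Lemma hermitian_dotmx_le n (H : 'M[C]_n) (a b s : C) :
  H^t* = H ->
  (forall d, eigenvalue H d -> d \is Num.real -> a + d ^+ 2 <= s * (b + d ^+ 2)) ->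
  forall u : 'rV_n, a * '[u] + '[u *m H] <= s * (b * '[u] + '[u *m H]).
Proof.
move=> hermH eig_le u.
have herm : H \is hermsymmx by apply/is_hermitianmxP; rewrite expr0 scale1r hermH.
set P := spectralmx H; set d := spectral_diag H.
have PU : P \is unitarymx := spectral_unitarymx H.
have Pu : P \in unitmx := spectral_unit H.
have HE : H = invmx P *m diag_mx d *m P.
  exact/orthomx_spectralP/hermitian_normalmx.
have d_real j : d 0 j \is Num.real.
  by have /mxOverP := hermitian_spectral_diag_real herm; apply.
have d_eig j : eigenvalue H (d 0 j).
  apply/eigenvalueP; exists (row j P).
    rewrite -row_mul HE !mulmxA mulmxV // mul1mx mul_diag_mx.
    by apply/rowP => k; rewrite !mxE.
  apply/eqP => rowj0; have := row_unitarymxP PU j j.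
  by rewrite rowj0 linear0l eqxx => /eqP; rewrite eq_sym oner_eq0.
pose y := u *m invmx P.
have uE : u = y *m P by rewrite mulmxKV.
have uHE : u *m H = y *m diag_mx d *m P by rewrite {1}HE uE !mulmxA mulmxK.
have splitE c : c * '[y] + '[y *m diag_mx d]
    = \sum_j (y 0 j * (y 0 j)^*) * (c + d 0 j ^+ 2).
  rewrite !dotmx_sum mulr_sumr -big_split /=; apply: eq_bigr => j _.
  rewrite mul_mx_diag !mxE rmorphM /= (conj_Creal (d_real j)) mulrDr.
  by congr (_ + _); [rewrite mulrC | rewrite expr2; ring].
rewrite uHE uE !(dotmx_mul_unitary _ PU) !splitE mulr_sumr.
apply: ler_sum => j _; rewrite mulrCA ler_wpM2l ?mul_conjC_ge0 //.
exact: eig_le.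
Qed.

Lemma skew_block_trC m (A : 'M[C]_m) : A^t* = A -> (skew_block A)^t* = - skew_block A.
Proof.
move=> hermA; rewrite tr_block_mx map_block_mx !trmx0 !map_mx0 linearN map_mxN /=.
by rewrite hermA opp_block_mx !oppr0 opprK.
Qed.

Lemma dotmx_row_mx n1 n2 (a : 'rV[C]_n1) (b : 'rV[C]_n2) :
  '[row_mx a b] = '[a] + '[b].
Proof. by rewrite !dotmxE tr_row_mx map_col_mx mul_row_col mxE. Qed.

Lemma dotmx_mul_skew_block m (A : 'M[C]_m) (r1 r2 : 'rV[C]_m) :
  '[row_mx r1 r2 *m skew_block A] = '[r1 *m A] + '[r2 *m A].
Proof.
by rewrite mul_row_block !mulmx0 add0r addr0 dotmx_row_mx mulmxN dnormN addrC.
Qed.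

Lemma skew_block_cayley_le m (A : 'M[C]_m) (a b c : C) (r : 'rV[C]_(m + m)) :
  A^t* = A -> a \is Num.real -> b \is Num.real ->
  (forall d, eigenvalue A d -> d \is Num.real ->
     a ^+ 2 + d ^+ 2 <= c * (b ^+ 2 + d ^+ 2)) ->
  '[r *m (a%:M - skew_block A)] <= c * '[r *m (b%:M + skew_block A)].
Proof.
move=> hermA ra rb eig_le.
have skewS := skew_block_trC hermA.
have skewNS : (- skew_block A)^t* = - - skew_block A by rewrite linearN map_mxN skewS.
rewrite !dotmx_mul_shift_skew // mulmxN dnormN -(hsubmxK r).
rewrite dotmx_mul_skew_block dotmx_row_mx.
have := lerD (hermitian_dotmx_le hermA eig_le (lsubmx r))
             (hermitian_dotmx_le hermA eig_le (rsubmx r)).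
set n1 := '[lsubmx r]; set n2 := '[rsubmx r].
set t1 := '[lsubmx r *m A]; set t2 := '[rsubmx r *m A].
have -> : a ^+ 2 * (n1 + n2) + (t1 + t2) = a ^+ 2 * n1 + t1 + (a ^+ 2 * n2 + t2) by ring.
suff -> : c * (b ^+ 2 * (n1 + n2) + (t1 + t2))
          = c * (b ^+ 2 * n1 + t1) + c * (b ^+ 2 * n2 + t2) by [].
by ring.
Qed.

Lemma NASS_eigenvalue_bound n (T D : 'M[C]_n) (w c eta : C) :
  0 < w -> D^t* = - D -> w%:M + T \in unitmx ->
  (forall x : 'rV_n, '[x *m (w%:M - T)] <= c * '[x *m (w%:M + T)]) ->
  eigenvalue (invmx ((2 * w)^-1 *: ((w%:M + T) *m (w%:M + D))) *m (T + D)) eta ->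
  `|1 - eta| ^+ 2 <= c.
Proof.
move=> w_gt0 skewD PU cayleyT_le.
have w_real : w \is Num.real by rewrite gtr0_real.
have QU := skew_shift_unitmx skewD w_real (lt0r_neq0 w_gt0).
have w2_neq0 : 2 * w != 0 by rewrite mulf_neq0 ?pnatr_eq0 ?lt0r_neq0.
move/(eigenvalue_NASS_cayley w2_neq0 PU QU).
apply: eigenvalue_sqr_norm_le => x.
rewrite mulmxA dotmx_cayley_skew ?lt0r_neq0 // mulmxA.
by have := cayleyT_le (x *m invmx (w%:M + T)); rewrite mulmxKV.
Qed.

End Hermitian.

Section RealData.
Variables (R : rcfType) (M : nat).
Implicit Types (T D : 'M[R]_M) (omega : R).

Lemma sigma_ge0 T omega : 0 <= sigma T omega.
Proof.
by apply: (big_ind (fun x => 0 <= x)) => // [x y|l _]; rewrite ?le_max ?sqrtr_ge0 // => ->.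
Qed.

Lemma sigma_lt1 T omega : 0 < omega -> sigma T omega < 1.
Proof.
move=> omega_gt0; apply: bigmax_lt => // l _.
have den_gt0 : 0 < (omega + 1) ^+ 2 + l ^+ 2 by rewrite !expr2; nra.
by rewrite -[ltRHS]sqrtr1 ltr_sqrt // ltr_pdivrMr // mul1r !expr2; nra.
Qed.

Lemma sigma_spectrum_le T omega l : 0 < omega -> l \in spectrum T ->
  (omega - 1) ^+ 2 + l ^+ 2 <= sigma T omega ^+ 2 * ((omega + 1) ^+ 2 + l ^+ 2).
Proof.
move=> omega_gt0 l_spec.
have den_gt0 : 0 < (omega + 1) ^+ 2 + l ^+ 2 by rewrite !expr2; nra.
have num_ge0 : 0 <= (omega - 1) ^+ 2 + l ^+ 2 by rewrite addr_ge0 ?sqr_ge0.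
rewrite -ler_pdivrMr // -(sqr_sqrtr (divr_ge0 num_ge0 (ltW den_gt0))).
rewrite lerXn2r ?nnegrE ?sqrtr_ge0 ?sigma_ge0 //.
exact: (le_bigmax_seq _ _ xpredT (fun l => Num.sqrt _) l_spec).
Qed.

Lemma eigenvalue_cplx_mx_spectrum T (d : R[i]) :
  eigenvalue (cplx_mx T) d -> d \is Num.real -> complex.Re d \in spectrum T.
Proof.
rewrite eigenvalue_root_char => + d_real; rewrite -(RRe_real d_real).
rewrite /cplx_mx -map_char_poly fmorph_root => root_d.
by rewrite /spectrum -(roots_on_rootsR (monic_neq0 (char_poly_monic T))) root_d.
Qed.

Lemma cplx_sigma_eigenvalue_le T omega (d : R[i]) : 0 < omega ->
  eigenvalue (cplx_mx T) d -> d \is Num.real ->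
  ((omega - 1)%:C)%C ^+ 2 + d ^+ 2
    <= ((sigma T omega)%:C)%C ^+ 2 * (((omega + 1)%:C)%C ^+ 2 + d ^+ 2).
Proof.
move=> omega_gt0 d_eig d_real.
have := sigma_spectrum_le omega_gt0 (eigenvalue_cplx_mx_spectrum d_eig d_real).
rewrite -lecR -(RRe_real d_real).
by rewrite !(rmorphD, rmorphM, rmorphXn).
Qed.

Lemma calT_skew_block T : calT T = 1%:M + skew_block T.
Proof. by rewrite /calT /skew_block scalar_mx_block add_block_mx !addr0 !add0r. Qed.

Lemma calD_skew_block D : calD D = skew_block (- D).
Proof. by rewrite /calD /skew_block opprK. Qed.

Lemma calR_split T D : calR T D = calT T + calD D.
Proof. by rewrite /calR /calT /calD add_block_mx !addr0 [- T + _]addrC. Qed.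

Lemma diag_nonneg_tr D : is_diag_nonneg D -> D^T = D.
Proof.
case=> D_diag _; apply/matrixP => i j; rewrite mxE.
by have [->|ij] := eqVneq i j; rewrite // !D_diag // eq_sym.
Qed.

End RealData.

Lemma real_cplx (R : rcfType) (x : R) : (x%:C)%C \is Num.real.
Proof. by apply/complex_realP; exists x. Qed.

Lemma cplx_mx_trC (R : rcfType) m n (A : 'M[R]_(m, n)) : (cplx_mx A)^t* = cplx_mx A^T.
Proof. by apply/matrixP => i j; rewrite !mxE conj_Creal ?real_cplx. Qed.

Lemma cplx_mx_skew_block (R : rcfType) m (A : 'M[R]_m) :
  cplx_mx (skew_block A) = skew_block (cplx_mx A).
Proof. by rewrite /cplx_mx map_block_mx map_mx0 map_mxN. Qed.

Lemma cplx_mx_NASS (R : rcfType) M (T D : 'M[R]_M) omega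
    (w := (omega%:C)%C) (Tc := cplx_mx (calT T)) (Dc := cplx_mx (calD D)) :
  cplx_mx (invmx (NASS omega T D) *m calR T D)
    = invmx ((2 * w)^-1 *: ((w%:M + Tc) *m (w%:M + Dc))) *m (Tc + Dc).
Proof.
rewrite calR_split /cplx_mx map_mxM map_invmx map_mxZ map_mxM !map_mxD map_scalar_mx.
by rewrite fmorphV rmorphM rmorph_nat.
Qed.

Section Complexified.
Variables (R : rcfType) (M : nat) (T D : 'M[R]_M) (omega : R).
Hypothesis omega_gt0 : 0 < omega.
Let w : R[i] := (omega%:C)%C.
Let S := skew_block (cplx_mx T).

Lemma cplx_calT_skew_block : cplx_mx (calT T) = 1%:M + S.
Proof. by rewrite calT_skew_block /S -cplx_mx_skew_block /cplx_mx map_mxD map_mx1. Qed.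

Lemma cplx_calT_shift_unitmx : T^T = T -> w%:M + cplx_mx (calT T) \in unitmx.
Proof.
move=> symT; rewrite cplx_calT_skew_block addrA -raddfD /= -(rmorph1 (real_complex R)).
rewrite -rmorphD skew_shift_unitmx ?real_cplx ?skew_block_trC ?cplx_mx_trC ?symT //.
by rewrite fmorph_eq0 gt_eqF ?addr_gt0.
Qed.

Lemma cplx_calT_cayley_le (x : 'rV[R[i]]_(M + M)) : T^T = T ->
  '[x *m (w%:M - cplx_mx (calT T))]
    <= ((sigma T omega)%:C)%C ^+ 2 * '[x *m (w%:M + cplx_mx (calT T))].
Proof.
move=> symT; rewrite cplx_calT_skew_block opprD !addrA -!raddfB -raddfD /=.
rewrite -(rmorph1 (real_complex R)) -rmorphD.
apply: skew_block_cayley_le; rewrite ?real_cplx ?cplx_mx_trC ?symT // => d.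
exact: cplx_sigma_eigenvalue_le.
Qed.

Lemma cplx_calD_trC : is_diag_nonneg D -> (cplx_mx (calD D))^t* = - cplx_mx (calD D).
Proof.
move=> diagD; rewrite calD_skew_block cplx_mx_skew_block skew_block_trC //.
by rewrite cplx_mx_trC linearN /= diag_nonneg_tr.
Qed.

End Complexified.

Theorem theorem4p1 (R : rcfType) (M : nat) (T D : 'M[R]_M) :
  (0 < M)%N ->
  T^T = T -> posdef T ->
  is_diag_nonneg D ->
  forall omega : R, 0 < omega ->
    sigma T omega < 1 /\
    (forall eta : complex R,
       eigenvalue (cplx_mx (invmx (NASS omega T D) *m calR T D)) eta ->
       `|eta - 1| <= ((sigma T omega)%:C)%C).
Proof.
move=> _ symT _ diagD omega omega_gt0; split; first exact: sigma_lt1.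
move=> eta; rewrite cplx_mx_NASS => eig.
have sigma_ge0C : 0 <= ((sigma T omega)%:C)%C by rewrite ler0c sigma_ge0.
rewrite distrC -ler_sqr ?nnegrE ?normr_ge0 //.
apply: (NASS_eigenvalue_bound _ (cplx_calD_trC diagD)
          (cplx_calT_shift_unitmx omega_gt0 symT) _ eig).
- by rewrite ltcR.
- by move=> x; exact: cplx_calT_cayley_le.
Qed.
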